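(* Let $I$ be an infinite set, $\mathcal U\subseteq P(I)$ a non-principal ultrafilter, and $\mathbb X_i=\langle X_i,\rho_i\rangle$ ($i\in I$) $L$-structures. (a) If $\{i\in I:\mathbb X_i\models\varphi^{\rm conn}_n\}\in\mathcal U$ for some $n\in\omega$, then the ultraproduct $\prod_{\mathcal U}\mathbb X_i$ is connected; if moreover $|I|$ is smaller than the first measurable cardinal, the converse also holds. (b) For an $L$-structure $\mathbb X$: if $\mathbb X$ is of finite diameter then the ultrapower $\prod_{\mathcal U}\mathbb X$ is connected; if moreover $|I|$ is smaller than the first measurable cardinal, the converse also holds.
   Context: $L$ is a language with one binary relation symbol; an $L$-structure is $\mathbb X=\langle X,\rho\rangle$, $X\neq\emptyset$, $\rho\subseteq X^2$. Connectivity is defined via the reflexivization $\rho_R=\rho\cup\{(x,x):x\in X\}$: write $\rho_R^0=\rho_R$, $\rho_R^1=\rho_R^{-1}$; a path of length $n+1$ from $x$ to $y$ is $\langle\bar z,\epsilon\rangle$ with $\bar z\in X^n$, $\epsilon\in\{0,1\}^{n+1}$, and $x\,\rho_R^{\epsilon_0}\,z_0\,\rho_R^{\epsilon_1}\cdots z_{n-1}\,\rho_R^{\epsilon_n}\,y$. $\mathbb X$ is connected iff any two points are joined by a path of some finite length. $\mathbb X\models\varphi^{\rm conn}_n$ means any two points are joined by a path of length $n+1$; $\mathbb X$ is of finite diameter iff this holds for some $n$. The ultraproduct $\prod_{\mathcal U}\mathbb X_i$ has universe $(\prod_i X_i)/\!\sim_{\mathcal U}$, where $x\sim_{\mathcal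 U}y$ iff $\{i:x_i=y_i\}\in\mathcal U$, and relation $[x]\,\rho\,[y]$ iff $\{i:x_i\,\rho_i\,y_i\}\in\mathcal U$; the ultrapower is the case $\mathbb X_i=\mathbb X$ for all $i$. ''Smaller than the first measurable cardinal'': below the least measurable cardinal if one exists, arbitrary otherwise. *)

From Stdlib Require Import List.

Definition ultrafilter {I : Type} (U : (I -> Prop) -> Prop) : Prop :=
  U (fun _ => True) /\
  ~ U (fun _ => False) /\
  (forall A B : I -> Prop, U A -> (forall i, A i -> B i) -> U B) /\
  (forall A B : I -> Prop, U A -> U B -> U (fun i => A i /\ B i)) /\
  (forall A : I -> Prop, U A \/ U (fun i => ~ A i)).

Definition nonprincipal {I : Type} (U : (I -> Prop) -> Prop) : Prop :=
  ~ exists i0 : I, U (fun i => i = i0).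

Definition infinite_type (I : Type) : Prop :=
  ~ exists l : list I, forall i : I, In i l.

Definition reflR {X : Type} (rho : X -> X -> Prop) (x y : X) : Prop :=
  rho x y \/ x = y.

Definition step {X : Type} (rho : X -> X -> Prop) (x y : X) : Prop :=
  reflR rho x y \/ reflR rho y x.

(* path_of_len rho n x y : there is a path of length n+1 from x to y, i.e.
   z_0..z_{n-1} and eps_0..eps_n with x rho_R^{eps_0} z_0 ... z_{n-1} rho_R^{eps_n} y *)
Fixpoint path_of_len {X : Type} (rho : X -> X -> Prop) (n : nat) (x y : X) : Prop :=
  match n with
  | O => step rho x y
  | S m => exists z : X, step rho x z /\ path_of_len rho m z y
  end.

Definition phi_conn {X : Type} (rho : X -> X -> Prop) (n : nat) : Prop :=
  forall x y : X, path_of_len rho n x y.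

Definition connected {X : Type} (rho : X -> X -> Prop) : Prop :=
  forall x y : X, exists n : nat, path_of_len rho n x y.

Definition finite_diameter {X : Type} (rho : X -> X -> Prop) : Prop :=
  exists n : nat, phi_conn rho n.

Definition ueq {I : Type} (U : (I -> Prop) -> Prop) {X : I -> Type}
  (f g : forall i, X i) : Prop := U (fun i => f i = g i).

(* universe: the quotient (prod_i X_i)/~_U, as the set of ~_U-classes *)
Definition uprod {I : Type} (U : (I -> Prop) -> Prop) (X : I -> Type) : Type :=
  { P : (forall i, X i) -> Prop | exists f : forall i, X i, P = ueq U f }.

Definition urel {I : Type} (U : (I -> Prop) -> Prop) {X : I -> Type}
  (rho : forall i, X i -> X i -> Prop) (a b : uprod U X) : Prop :=
  exists (f g : forall i, X i),
    proj1_sig a = ueq U f /\ proj1_sig b = ueq U g /\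
    U (fun i => rho i (f i) (g i)).

Definition upow {I : Type} (U : (I -> Prop) -> Prop) (Y : Type) : Type :=
  uprod U (fun _ : I => Y).
Definition upowrel {I : Type} (U : (I -> Prop) -> Prop) {Y : Type}
  (sigma : Y -> Y -> Prop) : upow U Y -> upow U Y -> Prop :=
  urel U (X := fun _ : I => Y) (fun _ => sigma).

Definition injective_fun {A B : Type} (f : A -> B) : Prop :=
  forall a1 a2, f a1 = f a2 -> a1 = a2.

Definition card_lt (J K : Type) : Prop :=
  (exists f : J -> K, injective_fun f) /\ ~ (exists g : K -> J, injective_fun g).

Definition complete_below (K : Type) (U : (K -> Prop) -> Prop) : Prop :=
  forall (J : Type) (A : J -> K -> Prop),
    card_lt J K -> (forall j, U (A j)) -> U (fun k => forall j, A j k).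

Definition measurable_card (K : Type) : Prop :=
  (~ exists f : K -> nat, injective_fun f) /\
  exists U : (K -> Prop) -> Prop, ultrafilter U /\ nonprincipal U /\ complete_below K U.

(* |I| is smaller than the first measurable cardinal (vacuous if none exists) *)
Definition below_first_measurable (I : Type) : Prop :=
  forall K : Type, measurable_card K -> card_lt I K.

From Stdlib Require Import Setoid Classical ClassicalEpsilon FunctionalExtensionality
  PropExtensionality ProofIrrelevance Arith.
From mathcomp Require ssreflect ssrfun ssrbool eqtype boolp wochoice.

(** The forward implications are Łoś's theorem for the formulas [phi_conn n]: a
    path of length [n+1] joins the classes of [f] and [g] iff it joins [f i] and
    [g i] for U-almost every [i].

    Conversely, if no [phi_conn n] holds U-almost everywhere, the sets [E_n] of
    indices where [phi_conn n] fails form a decreasing sequence in [U].  When [U]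
    is countably incomplete they can be shrunk so that every [i] lies in only
    finitely many of them; picking at each [i] two points that are not joined by
    a path of length [n+1] for the last [n] with [i] in [E_n] gives two classes
    joined by no path at all.

    Below the first measurable cardinal every non-principal ultrafilter is
    countably incomplete: otherwise, for the least cardinal [κ] admitting a
    cover of [I] by [κ] null sets, the pushforward of [U] along the cover is a
    non-principal [κ]-complete ultrafilter on [κ], so [κ <= |I|] is measurable. *)

Lemma sig_ext {A : Type} {P : A -> Prop} (a b : sig P) :
  proj1_sig a = proj1_sig b -> a = b.
Proof. apply eq_sig_hprop; intros; apply proof_irrelevance. Qed.

Lemma injection_of_rel {A B : Type} (R : A -> B -> Prop) :
  (forall a, exists b, R a b) -> (forall a1 a2 b, R a1 b -> R a2 b -> a1 = a2) ->
  exists g : A -> B, injective_fun g.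
Proof.
  intros Htot Huniq. destruct (choice R Htot) as [g Hg].
  exists g. intros a1 a2 E. apply (Huniq a1 a2 (g a2)); [rewrite <- E|]; apply Hg.
Qed.

Definition null_cover {I : Type} (U : (I -> Prop) -> Prop) (J : Type) : Prop :=
  exists A : J -> I -> Prop, (forall j, ~ U (A j)) /\ forall i, exists j, A j i.

Section Ultrafilter.
Context {I : Type} {U : (I -> Prop) -> Prop} (HU : ultrafilter U).

Lemma uf_mono {A B : I -> Prop} : U A -> (forall i, A i -> B i) -> U B.
Proof. destruct HU as (_ & _ & Hm & _). eauto. Qed.

Lemma uf_and {A B : I -> Prop} : U A -> U B -> U (fun i => A i /\ B i).
Proof. destruct HU as (_ & _ & _ & Ha & _). eauto. Qed.

Lemma uf_of_all {A : I -> Prop} : (forall i, A i) -> U A.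
Proof. intro H. apply (uf_mono (proj1 HU)). auto. Qed.

Lemma uf_null_of_empty {A : I -> Prop} : (forall i, ~ A i) -> ~ U A.
Proof.
  intros H HA. apply (proj1 (proj2 HU)), (uf_mono HA). intros i Hi. exact (H i Hi).
Qed.

Lemma uf_compl {A : I -> Prop} : ~ U A -> U (fun i => ~ A i).
Proof. destruct HU as (_ & _ & _ & _ & He). destruct (He A); tauto. Qed.

Lemma uf_not_compl {A : I -> Prop} : U A -> ~ U (fun i => ~ A i).
Proof.
  intros H1 H2. refine (uf_null_of_empty _ (uf_and H1 H2)). intros i []; auto.
Qed.

Lemma uf_or {A B : I -> Prop} : U (fun i => A i \/ B i) -> U A \/ U B.
Proof.
  intro H. destruct (classic (U A)) as [|HnA]; [now left|right].
  apply (uf_mono (uf_and H (uf_compl HnA))). intro i; tauto.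
Qed.

Lemma uf_avoid_initial (C : nat -> I -> Prop) :
  (forall k, ~ U (C k)) -> forall n, U (fun i => forall k, k <= n -> ~ C k i).
Proof.
  intros Cnull n. induction n as [|n IH].
  - apply (uf_mono (uf_compl (Cnull 0))). intros i Hi k Hk.
    apply Nat.le_0_r in Hk. subst. exact Hi.
  - apply (uf_mono (uf_and IH (uf_compl (Cnull (S n))))). intros i [Hle HSn] k Hk.
    destruct (proj1 (Nat.le_succ_r k n) Hk) as [Hk' | ->]; [exact (Hle k Hk')|exact HSn].
Qed.

Lemma uf_forall_of_no_null_cover {J : Type} (A : J -> I -> Prop) :
  ~ null_cover U J -> (forall j, U (A j)) -> U (fun i => forall j, A j i).
Proof.
  intros Hno HA. apply NNPP; intro Hnot.
  destruct (classic (inhabited J)) as [[j0]|HJ].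
  2:{ apply Hnot, uf_of_all. intros i j. exfalso. exact (HJ (inhabits j)). }
  (* If the intersection is null, then so is every piece of this cover of [I]. *)
  apply Hno. exists (fun j i => ~ A j i \/ (j = j0 /\ forall j', A j' i)). split.
  - intros j Hj. destruct (uf_or Hj) as [H|H].
    + exact (uf_not_compl (HA j) H).
    + apply Hnot, (uf_mono H). intros i []; auto.
  - intro i. destruct (classic (forall j, A j i)) as [Hall|Hsome].
    + exists j0. right. auto.
    + apply not_all_ex_not in Hsome as [j Hj]. exists j. left. exact Hj.
Qed.

Lemma null_cover_inj {J J' : Type} (q : J -> J') :
  injective_fun q -> null_cover U J -> null_cover U J'.
Proof.
  intros Hq [A [Anull Acov]].
  exists (fun k i => exists j, q j = k /\ A j i). split.
  - intros k Hk. destruct (classic (exists j, q j = k)) as [[j <-]|Hout].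
    + apply (Anull j), (uf_mono Hk). intros i [j' [E Hi]].
      rewrite <- (Hq _ _ E). exact Hi.
    + revert Hk. apply uf_null_of_empty. intros i [j [E _]]. eauto.
  - intro i. destruct (Acov i) as [j Hj]. exists (q j), j. auto.
Qed.

Lemma null_cover_singletons : nonprincipal U -> null_cover U I.
Proof.
  intro HnP. exists (fun i0 i => i = i0). split.
  - intros i0 H. apply HnP. exists i0. exact H.
  - intro i. exists i. reflexivity.
Qed.

Lemma ultrafilter_pushforward {K : Type} (h : I -> K) :
  ultrafilter (fun B : K -> Prop => U (fun i => B (h i))).
Proof.
  destruct HU as (Ht & Hf & Hm & Ha & He). repeat split.
  - exact Ht.
  - exact Hf.
  - intros B1 B2 H1 H2. apply (Hm _ _ H1). auto.
  - intros B1 B2. apply Ha.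
  - intro B. apply He.
Qed.

Lemma null_cover_pullback {K J : Type} (h : I -> K) :
  null_cover (fun B : K -> Prop => U (fun i => B (h i))) J -> null_cover U J.
Proof.
  intros [A [Anull Acov]]. exists (fun j i => A j (h i)). split; [exact Anull|].
  intro i. apply Acov.
Qed.

End Ultrafilter.

Definition cls {I : Type} (U : (I -> Prop) -> Prop) {X : I -> Type}
  (f : forall i, X i) : uprod U X := exist _ (ueq U f) (ex_intro _ f eq_refl).

Lemma path_of_len_S {Y : Type} (sigma : Y -> Y -> Prop) n x y :
  path_of_len sigma n x y -> path_of_len sigma (S n) x y.
Proof. intro H. exists x. split; [left; right; reflexivity|exact H]. Qed.

Lemma path_of_len_mono {Y : Type} (sigma : Y -> Y -> Prop) n n' x y :
  n <= n' -> path_of_len sigma n x y -> path_of_len sigma n' x y.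
Proof. induction 1; auto using path_of_len_S. Qed.

Lemma decreasing_le (E : nat -> Prop) :
  (forall n, E (S n) -> E n) -> forall n n', n <= n' -> E n' -> E n.
Proof. intros Hdec n n' Hle. induction Hle; auto. Qed.

Lemma decreasing_last (E : nat -> Prop) : (forall n, E (S n) -> E n) ->
  forall k, ~ E k -> ~ E 0 \/ exists n, E n /\ ~ E (S n).
Proof.
  intros Hdec k. induction k as [|k IH]; intro Hk; [now left|].
  destruct (classic (E k)) as [H|H]; [right; exists k; auto|auto].
Qed.

Lemma far_pair {Y : Type} (sigma : Y -> Y -> Prop) (E : nat -> Prop) :
  inhabited Y -> (forall n, E (S n) -> E n) -> (forall n, E n -> ~ phi_conn sigma n) ->
  (exists k, ~ E k) -> exists x y, forall n, E n -> ~ path_of_len sigma n x y.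
Proof.
  intros [y0] Hdec Hfar [k Hk].
  destruct (decreasing_last E Hdec k Hk) as [H0|[n [Hn HSn]]].
  - exists y0, y0. intros n Hn. exfalso.
    exact (H0 (decreasing_le E Hdec 0 n (Nat.le_0_l n) Hn)).
  - apply Hfar in Hn. apply not_all_ex_not in Hn as [x Hx].
    apply not_all_ex_not in Hx as [y Hy].
    exists x, y. intros n' Hn' Hp. destruct (le_lt_dec n' n) as [Hle|Hlt].
    + exact (Hy (path_of_len_mono sigma n' n x y Hle Hp)).
    + exact (HSn (decreasing_le E Hdec (S n) n' Hlt Hn')).
Qed.

Section Ultraproduct.
Context {I : Type} {U : (I -> Prop) -> Prop} (HU : ultrafilter U).
Context {X : I -> Type} (rho : forall i, X i -> X i -> Prop).

Lemma cls_surj (a : uprod U X) : exists f, a = cls U f.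
Proof. destruct a as [P [f Hf]]. exists f. apply sig_ext. exact Hf. Qed.

Lemma cls_eq (f g : forall i, X i) : cls U f = cls U g <-> U (fun i => f i = g i).
Proof.
  split; intro H.
  - apply (f_equal (@proj1_sig _ _)) in H. simpl in H.
    change (ueq U f g). rewrite H. apply (uf_of_all HU). reflexivity.
  - apply sig_ext. simpl. apply functional_extensionality. intro h.
    apply propositional_extensionality. unfold ueq. split; intro H'.
    + apply (uf_mono HU (uf_and HU H H')). intros i []. congruence.
    + apply (uf_mono HU (uf_and HU H H')). intros i []. congruence.
Qed.

Lemma urel_cls (f g : forall i, X i) :
  urel U rho (cls U f) (cls U g) <-> U (fun i => rho i (f i) (g i)).
Proof.
  split.
  - intros [f' [g' [Ef [Eg H]]]].
    assert (Hf : U (fun i => f i = f' i)) by (apply cls_eq, sig_ext; exact Ef).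
    assert (Hg : U (fun i => g i = g' i)) by (apply cls_eq, sig_ext; exact Eg).
    apply (uf_mono HU (uf_and HU Hf (uf_and HU Hg H))).
    intros i [-> [-> Hi]]. exact Hi.
  - intro H. exists f, g. split; [reflexivity|split; [reflexivity|exact H]].
Qed.

Lemma step_cls (f g : forall i, X i) :
  step (urel U rho) (cls U f) (cls U g) <-> U (fun i => step (rho i) (f i) (g i)).
Proof.
  unfold step, reflR. rewrite !urel_cls, !cls_eq. split.
  - intros [[H|H]|[H|H]]; apply (uf_mono HU H); intro i; tauto.
  - intro H. destruct (uf_or HU H) as [H1|H1]; [left|right]; exact (uf_or HU H1).
Qed.

Lemma path_cls n : forall f g : forall i, X i,
  path_of_len (urel U rho) n (cls U f) (cls U g) <->
  U (fun i => path_of_len (rho i) n (f i) (g i)).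
Proof.
  induction n as [|n IH]; intros f g; [apply step_cls|]. split.
  - intros [z [Hs Hp]]. destruct (cls_surj z) as [h ->].
    apply step_cls in Hs. apply IH in Hp.
    apply (uf_mono HU (uf_and HU Hs Hp)). intros i Hi. exists (h i). exact Hi.
  - intro H.
    set (h := fun i => epsilon (inhabits (f i))
                (fun z => step (rho i) (f i) z /\ path_of_len (rho i) n z (g i))).
    assert (Hh : U (fun i => step (rho i) (f i) (h i) /\ path_of_len (rho i) n (h i) (g i))).
    { apply (uf_mono HU H). intros i Hi. exact (epsilon_spec _ _ Hi). }
    exists (cls U h). split.
    + apply step_cls, (uf_mono HU Hh). tauto.
    + apply IH, (uf_mono HU Hh). tauto.
Qed.

Lemma uprod_connected_of_phi_conn n :
  U (fun i => phi_conn (rho i) n) -> connected (urel U rho).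
Proof.
  intros Hn a b. destruct (cls_surj a) as [f ->], (cls_surj b) as [g ->].
  exists n. apply path_cls, (uf_mono HU Hn). intros i Hi. apply Hi.
Qed.

Lemma phi_conn_of_uprod_connected : (forall i, inhabited (X i)) ->
  null_cover U nat -> connected (urel U rho) ->
  exists n, U (fun i => phi_conn (rho i) n).
Proof.
  intros HX [C [Cnull Ccov]] Hc. apply NNPP; intro Hn.
  set (E := fun n i => ~ phi_conn (rho i) n /\ forall k, k <= n -> ~ C k i).
  assert (Eae : forall n, U (E n)).
  { intro n. apply (uf_and HU); [|exact (uf_avoid_initial HU C Cnull n)].
    apply (uf_compl HU). intro H. apply Hn. exists n. exact H. }
  assert (Edec : forall i n, E (S n) i -> E n i).
  { intros i n [Hnc Hav]. split.
    - intro H. apply Hnc. intros x y. apply path_of_len_S, H.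
    - intros k Hk. apply Hav. auto. }
  assert (Hpair : forall i, exists p : X i * X i,
             forall n, E n i -> ~ path_of_len (rho i) n (fst p) (snd p)).
  { intro i.
    destruct (far_pair (rho i) (fun n => E n i) (HX i) (Edec i) (fun n H => proj1 H))
      as [x [y Hxy]].
    - destruct (Ccov i) as [k Hk]. exists k. intros [_ Hav]. exact (Hav k (le_n k) Hk).
    - exists (x, y). exact Hxy. }
  set (p := fun i => proj1_sig (constructive_indefinite_description _ (Hpair i))).
  assert (Hp : forall i n, E n i -> ~ path_of_len (rho i) n (fst (p i)) (snd (p i)))
    by (intro i; exact (proj2_sig (constructive_indefinite_description _ (Hpair i)))).
  destruct (Hc (cls U (fun i => fst (p i))) (cls U (fun i => snd (p i)))) as [n Hpath].
  apply path_cls in Hpath.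
  refine (uf_null_of_empty HU _ (uf_and HU Hpath (Eae n))).
  intros i [Hpi HEi]. exact (Hp i n HEi Hpi).
Qed.

End Ultraproduct.

Definition is_well_order {W : Type} (R : W -> W -> Prop) : Prop :=
  (forall A : W -> Prop, (exists x, A x) -> exists z, A z /\ forall a, A a -> R z a) /\
  (forall x y, R x y -> R y x -> x = y).

Definition lt_of {W : Type} (R : W -> W -> Prop) (x y : W) : Prop := R x y /\ x <> y.

Definition segment {W : Type} (R : W -> W -> Prop) (m : W) : Type := {y | lt_of R y m}.

Module WellOrdering.
Import ssreflect ssrfun ssrbool eqtype boolp wochoice.

Lemma exists_well_order (T : Type) : exists R : T -> T -> Prop, is_well_order R.
Proof.
case: (well_ordering_principle {classic T}) => R HR.
have minimum (A : T -> Prop) : (exists x, A x) ->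
    exists! z, minimum_of R (fun y : {classic T} => `[< A y >]) z.
  by move=> [x Ax]; apply: HR; exists x; rewrite unfold_in; apply/asboolP.
have refl w : R w w.
  have [z [[+ lbz] _]] := minimum (fun z => z = w) (ex_intro _ w erefl).
  by rewrite unfold_in => /asboolP Ezw; subst; apply: lbz; rewrite unfold_in; apply/asboolP.
exists (fun x y => R x y); split.
  move=> A /minimum [z [[Az lbz] _]]; exists z; split.
    by move: Az; rewrite unfold_in => /asboolP.
  by move=> a Aa; apply: lbz; rewrite unfold_in; apply/asboolP.
move=> x y Rxy Ryx.
have [z [_ uniq]] := minimum (fun z => z = x \/ z = y) (ex_intro _ x (or_introl erefl)).
have Hx : minimum_of R (fun z : {classic T} => `[< z = x \/ z = y >]) x.
  split; first by rewrite unfold_in; apply/asboolP; left.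
  by move=> a; rewrite unfold_in => /asboolP [->|->].
have Hy : minimum_of R (fun z : {classic T} => `[< z = x \/ z = y >]) y.
  split; first by rewrite unfold_in; apply/asboolP; right.
  by move=> a; rewrite unfold_in => /asboolP [->|->].
by rewrite -(uniq _ Hx) -(uniq _ Hy).
Qed.

End WellOrdering.

Section WellOrder.
Context {W : Type} {R : W -> W -> Prop} (HR : is_well_order R).

Lemma well_order_total x y : R x y \/ R y x.
Proof.
  destruct (proj1 HR (fun z => z = x \/ z = y)) as [z [[-> | ->] Hz]].
  - exists x. auto.
  - left. apply Hz. auto.
  - right. apply Hz. auto.
Qed.

Lemma well_order_wf : well_founded (lt_of R).
Proof.
  intro a. apply NNPP; intro Hna.
  destruct (proj1 HR (fun y => ~ Acc (lt_of R) y)) as [z [Hz Hzmin]]; [exists a; exact Hna|].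
  apply Hz. constructor. intros y [Ryz neq]. apply NNPP; intro Hy.
  apply neq, (proj2 HR); auto.
Qed.

Definition least (A : W -> Prop) : option W :=
  match excluded_middle_informative (exists z, A z /\ forall a, A a -> R z a) with
  | left e => Some (proj1_sig (constructive_indefinite_description _ e))
  | right _ => None
  end.

Lemma least_spec (A : W -> Prop) z : least A = Some z -> A z /\ forall a, A a -> R z a.
Proof.
  unfold least. destruct excluded_middle_informative as [e|e]; [|discriminate].
  intro E. injection E as <-.
  exact (proj2_sig (constructive_indefinite_description _ e)).
Qed.

Lemma least_exists (A : W -> Prop) : (exists x, A x) -> exists z, least A = Some z.
Proof.
  intro Hx. unfold least. destruct excluded_middle_informative as [e|e].
  - eexists. reflexivity.
  - exfalso. exact (e (proj1 HR A Hx)).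
Qed.

Variables (m : W) (S : W -> Prop).

(* Transfinite enumeration of [S] by the elements below [m]: each [s] receives the
   least value below [m] not already taken by an element of [S] before [s]. *)
Definition collapse : W -> option W :=
  Fix well_order_wf (fun _ => option W)
    (fun s rec => least (fun y => lt_of R y m /\
        forall s' (p : lt_of R s' s), S s' -> rec s' p <> Some y)).

Lemma collapse_eq s : collapse s = least (fun y => lt_of R y m /\
  forall s', lt_of R s' s -> S s' -> collapse s' <> Some y).
Proof.
  unfold collapse at 1. rewrite Fix_eq; [reflexivity|].
  intros x h h' E. replace h with h'; [reflexivity|].
  apply functional_extensionality_dep; intro y.
  apply functional_extensionality_dep; intro p. symmetry. apply E.
Qed.

Lemma collapse_new s y : collapse s = Some y ->
  forall s', lt_of R s' s -> S s' -> collapse s' <> Some y.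
Proof. rewrite collapse_eq. intro Hy. apply (least_spec _ _ Hy). Qed.

Lemma collapse_dichotomy :
  (exists g : segment R m -> {s | S s}, injective_fun g) \/
  (exists x, lt_of R x m /\ exists g : {s | S s} -> segment R x, injective_fun g).
Proof.
  destruct (classic (forall y, lt_of R y m -> exists s, S s /\ collapse s = Some y))
    as [Hall|Hmiss].
  - left.
    apply (injection_of_rel
      (fun (y : segment R m) (s : {s | S s}) => collapse (proj1_sig s) = Some (proj1_sig y))).
    + intros [y Hy]. destruct (Hall y Hy) as [s [Ss Hs]]. exists (exist _ s Ss). exact Hs.
    + intros y1 y2 s E1 E2. apply sig_ext. congruence.
  - right. apply not_all_ex_not in Hmiss as [x Hx]. apply imply_to_and in Hx as [Hxm Hx].
    exists x. split; [exact Hxm|].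
    assert (Hval : forall s, S s -> exists y, collapse s = Some y /\ lt_of R y x).
    { intros s Ss.
      assert (Ax : lt_of R x m /\ forall s', lt_of R s' s -> S s' -> collapse s' <> Some x).
      { split; [exact Hxm|]. intros s' _ Ss' E. exact (Hx (ex_intro _ s' (conj Ss' E))). }
      destruct (least_exists (fun y => lt_of R y m /\
        forall s', lt_of R s' s -> S s' -> collapse s' <> Some y) (ex_intro _ x Ax)) as [y Hy].
      exists y. rewrite collapse_eq. split; [exact Hy|split].
      - exact (proj2 (least_spec _ _ Hy) x Ax).
      - intros ->. apply Hx. exists s. split; [exact Ss|rewrite collapse_eq; exact Hy]. }
    apply (injection_of_rel
      (fun (s : {s | S s}) (y : segment R x) => collapse (proj1_sig s) = Some (proj1_sig y))).
    + intros [s Ss]. destruct (Hval s Ss) as [y [Hy Hyx]]. exists (exist _ y Hyx). exact Hy.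
    + intros [s1 S1] [s2 S2] [y Hyx] E1 E2. simpl in *. apply sig_ext. simpl.
      apply NNPP; intro ne. destruct (well_order_total s1 s2) as [H12|H21].
      * exact (collapse_new s2 y E2 s1 (conj H12 ne) S1 E1).
      * exact (collapse_new s1 y E1 s2 (conj H21 (not_eq_sym ne)) S2 E2).
Qed.

End WellOrder.

Definition with_top {W : Type} (R : W -> W -> Prop) (a b : option W) : Prop :=
  match a, b with
  | Some x, Some y => R x y
  | _, None => True
  | None, Some _ => False
  end.

Lemma well_order_with_top {W : Type} (R : W -> W -> Prop) :
  is_well_order R -> is_well_order (with_top R).
Proof.
  intros [Hmin Hanti]. split.
  - intros A [x Ax]. destruct (classic (exists i, A (Some i))) as [Hs|Hn].
    + destruct (Hmin _ Hs) as [z [Az Hz]]. exists (Some z). split; [exact Az|].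
      intros [a|] Aa; simpl; auto.
    + exists None. destruct x as [x|]; [exfalso; eauto|]. split; [exact Ax|].
      intros [a|] Aa; simpl; auto. apply Hn. eauto.
  - intros [x|] [y|]; simpl; intros; try tauto. f_equal. auto.
Qed.

Lemma top_not_lt {W : Type} (R : W -> W -> Prop) (m : option W) :
  ~ lt_of (with_top R) None m.
Proof. destruct m as [m|]; intros [Hle Hne]; [exact Hle|exact (Hne eq_refl)]. Qed.

Section CountableIncompleteness.
Context {I : Type} {U : (I -> Prop) -> Prop} (HU : ultrafilter U).

Lemma no_smaller_null_cover {W : Type} {R : W -> W -> Prop} (HR : is_well_order R) (m : W) :
  (forall x, null_cover U (segment R x) -> R m x) ->
  forall J : Type, card_lt J (segment R m) -> ~ null_cover U J.
Proof.
  intros Hmin J [[e He] Hno] HJ.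
  set (S := fun s => exists j, proj1_sig (e j) = s).
  destruct (collapse_dichotomy HR m S) as [[g Hg]|[x [Hxm [g Hg]]]].
  - apply Hno. apply (injection_of_rel (fun k j => proj1_sig (e j) = proj1_sig (g k))).
    + intro k. exact (proj2_sig (g k)).
    + intros k1 k2 j E1 E2. apply Hg, sig_ext. congruence.
  - apply (proj2 Hxm), (proj2 HR); [exact (proj1 Hxm)|]. apply Hmin.
    refine (null_cover_inj HU (fun j => g (exist S (proj1_sig (e j)) (ex_intro _ j eq_refl)))
              _ HJ).
    intros j1 j2 E. apply Hg in E. apply He, sig_ext.
    exact (f_equal (@proj1_sig _ _) E).
Qed.

Lemma null_cover_nat_of_below_first_measurable :
  nonprincipal U -> below_first_measurable I -> null_cover U nat.
Proof.
  intros HnP Hbm. apply NNPP; intro Hnat.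
  destruct (WellOrdering.exists_well_order I) as [R0 HR0].
  pose proof (well_order_with_top R0 HR0) as HR. set (R := with_top R0) in HR.
  assert (Hcover_top : null_cover U (segment R None)).
  { assert (Hlt : forall i, lt_of R (Some i) None) by (split; [exact Logic.I|discriminate]).
    refine (null_cover_inj HU (fun i => exist _ (Some i) (Hlt i)) _
              (null_cover_singletons HnP)).
    intros i1 i2 E. apply (f_equal (@proj1_sig _ _)) in E. simpl in E. congruence. }
  destruct (proj1 HR (fun y => null_cover U (segment R y)) (ex_intro _ None Hcover_top))
    as [m [Hm Hmin]].
  pose proof Hm as [A [Anull Acov]].
  destruct (choice (fun i k => A k i) Acov) as [h Hh].
  set (V := fun B : segment R m -> Prop => U (fun i => B (h i))).
  assert (Hmeas : measurable_card (segment R m)).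
  { split.
    - intros [e He]. exact (Hnat (null_cover_inj HU e He Hm)).
    - exists V. split; [exact (ultrafilter_pushforward HU h)|split].
      + intros [k0 Hk0]. apply (Anull k0), (uf_mono HU Hk0). intros i <-. apply Hh.
      + intros J B HJ HB.
        apply (uf_forall_of_no_null_cover (ultrafilter_pushforward HU h) B); [|exact HB].
        intro HVJ.
        exact (no_smaller_null_cover HR m Hmin J HJ (null_cover_pullback h HVJ)). }
  destruct (Hbm _ Hmeas) as [_ Hno]. apply Hno.
  apply (injection_of_rel (fun (k : segment R m) i => proj1_sig k = Some i)).
  - intros [[i|] Hk]; [exists i; reflexivity|]. exfalso. exact (top_not_lt R0 m Hk).
  - intros k1 k2 i E1 E2. apply sig_ext. congruence.
Qed.

End CountableIncompleteness.

Theorem corollary2p6 (I : Type) (U : (I -> Prop) -> Prop)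
  (HU : ultrafilter U) (HnP : nonprincipal U) (Hinf : infinite_type I)
  (X : I -> Type) (rho : forall i, X i -> X i -> Prop)
  (HX : forall i, inhabited (X i)) :
  (* (a) *)
  (((exists n : nat, U (fun i => phi_conn (rho i) n)) -> connected (urel U rho)) /\
   (below_first_measurable I -> connected (urel U rho) ->
      exists n : nat, U (fun i => phi_conn (rho i) n))) /\
  (* (b) *)
  (forall (Y : Type) (sigma : Y -> Y -> Prop), inhabited Y ->
     (finite_diameter sigma -> connected (upowrel U (I := I) sigma)) /\
     (below_first_measurable I -> connected (upowrel U (I := I) sigma) ->
        finite_diameter sigma)).
Proof.
  split; [split|].
  - intros [n Hn]. exact (uprod_connected_of_phi_conn HU rho n Hn).
  - intros Hbm. apply (phi_conn_of_uprod_connected HU rho HX).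
    exact (null_cover_nat_of_below_first_measurable HU HnP Hbm).
  - intros Y sigma HY. split.
    + intros [n Hn]. apply (uprod_connected_of_phi_conn HU (fun _ => sigma) n).
      apply (uf_of_all HU). intro. exact Hn.
    + intros Hbm Hc.
      destruct (phi_conn_of_uprod_connected HU (fun _ : I => sigma) (fun _ => HY)
                  (null_cover_nat_of_below_first_measurable HU HnP Hbm) Hc) as [n Hn].
      exists n. apply NNPP; intro Hno. exact (uf_null_of_empty HU (fun _ => Hno) Hn).
Qed.
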